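(* For every $k\ge1$, $S^{(k)}_{-1}=0$ (and hence also the $\eta^{1}$-coefficient of $S^{(k)}_{\rm odd}$ vanishes).
   Context: Let $\eta$ be a large parameter, $c\neq0$. $(H_{\rm II})$: $\frac{d\lambda}{dt}=\eta\nu$, $\frac{d\nu}{dt}=\eta(2\lambda^3+t\lambda+c)$. Let $\lambda_0$ be a branch of $2\lambda_0^3+t\lambda_0+c=0$, $\Delta=6\lambda_0^2+t$, $\tau_1$ a zero of $\Delta$, $\phi_{\rm II}=\int_{\tau_1}^t\sqrt\Delta\,dt$. A 1-parameter solution of $(H_{\rm II})$ is a formal transseries $\lambda=\sum_{k\ge0}(\alpha\eta^{-1/2})^k\lambda^{(k)}(t,c,\eta)e^{k\eta\phi_{\rm II}}$, $\nu=\eta^{-1}\frac{d\lambda}{dt}=\sum_{k\ge0}(\alpha\eta^{-1/2})^k\nu^{(k)}e^{k\eta\phi_{\rm II}}$, with $\alpha$ a free parameter, $\lambda^{(k)},\nu^{(k)}$ formal power series in $\eta^{-1}$, $(\lambda^{(0)},\nu^{(0)})$ the 0-parameter solution (formal power series solution with leading terms $\lambda_0$, $0$), solving $(H_{\rm II})$ formally. Substitute it into $Q_{\rm II}=x^4+tx^2+2cx+2K_{\rm II}-\eta^{-1}\frac{\nu}{x-\lambda}+\eta^{-2}\frac{3}{4(x-\lambda)^2}$, $K_{\rm II}=\frac12[\nu^2-(\lambda^4+t\lambda^2+2c\lambda)]$, and $A_{\rm II}=\frac{1}{2(x-\lambda)}$, expanded as formal series $Q_{\rm II}=\sum_k(\alpha\eta^{-1/2})^kQ^{(k)}_{\rm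 II}e^{k\eta\phi_{\rm II}}$, $Q^{(k)}_{\rm II}=\sum_{\ell\ge0}\eta^{-\ell}Q^{(k)}_\ell(x,t,c)$ (similarly $A_{\rm II}$). The leading term is $Q_0=Q^{(0)}_0=(x-\lambda_0)^2(x^2+2\lambda_0x+3\lambda_0^2+t)$; let $S_{-1}=\sqrt{Q_0}$ with $S_{-1}\sim x^2$ at $\infty$. Let $S=\sum_{k\ge0}(\alpha\eta^{-1/2})^kS^{(k)}e^{k\eta\phi_{\rm II}}$, $S^{(k)}=\sum_{\ell\ge-1}\eta^{-\ell}S^{(k)}_\ell(x,t,c)$, be the formal solution of the Riccati equation $S^2+\partial_xS=\eta^2Q_{\rm II}$ with $S^{(0)}_{-1}=S_{-1}$, all coefficients being determined recursively by $2S_{-1}S^{(k)}_{\ell+1}+\sum_{k_1+k_2=k,\ell_1+\ell_2=\ell,0\le k_j<k\text{ or }\dots}S^{(k_1)}_{\ell_1}S^{(k_2)}_{\ell_2}+\partial_xS^{(k)}_\ell=Q^{(k)}_{\ell+2}$ (the sum over all pairs other than those involving $S_{-1}S^{(k)}_{\ell+1}$). $S^\dagger$ is the analogous solution with $S^{\dagger(0)}_{-1}=-S_{-1}$ and $S_{\rm odd}=\frac12(S-S^\dagger)$. One has the compatibility relation $\partial_tS=\partial_x(A_{\rm II}S-\frac12\partial_xA_{\rm II})$, which holds because $(\lambda,\nu)$ solves $(H_{\rm II})$. *)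

From HB Require Import structures.
From mathcomp Require Import all_boot all_order all_algebra.
Set Implicit Arguments. Unset Strict Implicit. Unset Printing Implicit Defensive.
Import Order.TTheory GRing.Theory Num.Theory.
Local Open Scope ring_scope.

(* A formal transseries  F = sum_{k>=0} sum_{l>=0} (alpha eta^{-1/2})^k e^{k eta phi} eta^{-l} F k l
   is represented by its coefficient array  F : nat -> nat -> K,
   F k l = F^{(k)}_l  (k = transseries level, l = power of eta^{-1}).
   The monomials multiply as in a two-variable power series ring. *)
Definition ser (K : Type) := nat -> nat -> K.

Section Ser.
Variable K : fieldType.

Definition sconst (a : K) : ser K :=
  fun k l => if (k == 0%N) && (l == 0%N) then a else 0.
Definition sadd (f g : ser K) : ser K := fun k l => f k l + g k l.
Definition ssub (f g : ser K) : ser K := fun k l => f k l - g k l.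
Definition sscale (a : K) (f : ser K) : ser K := fun k l => a * f k l.
Definition smul (f g : ser K) : ser K :=
  fun k l => \sum_(i < k.+1) \sum_(j < l.+1) f i j * g (k - i)%N (l - j)%N.
Definition sexp (f : ser K) (n : nat) : ser K := iter n (smul f) (sconst 1).
(* multiplication by eta^{-1} *)
Definition sh (f : ser K) : ser K := fun k l => if l is l'.+1 then f k l' else 0.
(* multiplicative inverse (geometric expansion around the constant term f 0 0) *)
Definition sinv (f : ser K) : ser K :=
  let a := f 0%N 0%N in let g := ssub f (sconst a) in
  fun k l => \sum_(n < (k + l).+1) ((-1) ^+ n * a ^- n.+1) * sexp g n k l.

(* eta^{-1} d/dt on transseries, where Dt is d/dt on coefficients and
   d(phi_II)/dt = s = sqrt(Delta), so d/dt e^{k eta phi} = k eta s e^{k eta phi}. *)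
Definition ddt (Dt : K -> K) (s : K) (f : ser K) : ser K :=
  fun k l => k%:R * s * f k l + (if l is l'.+1 then Dt (f k l') else 0).

Definition nu_of (Dt : K -> K) (s : K) (lam : ser K) : ser K := ddt Dt s lam.

Definition PII (t c : K) (lam : ser K) : ser K :=
  sadd (sscale 2 (sexp lam 3)) (sadd (sscale t lam) (sconst c)).

Definition KII (t c : K) (lam nu : ser K) : ser K :=
  sscale (1 / 2) (ssub (sexp nu 2)
    (sadd (sexp lam 4) (sadd (sscale t (sexp lam 2)) (sscale (2 * c) lam)))).

Definition QII (t c x : K) (lam nu : ser K) : ser K :=
  let ixl := sinv (ssub (sconst x) lam) in
  sadd (sconst (x ^+ 4 + t * x ^+ 2 + 2 * c * x))
  (sadd (sscale 2 (KII t c lam nu))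
  (sadd (sscale (-1) (sh (smul nu ixl)))
        (sh (sh (sscale (3 / 4) (sexp ixl 2)))))).

(* Riccati equation S^2 + d_x S = eta^2 Q_II, coefficientwise.
   S is stored with shifted eta-index:  S k j = S^{(k)}_{j-1}  (j >= 0),
   so that S k 0 is the eta^1 coefficient S^{(k)}_{-1}. *)
Definition riccati (Dx : K -> K) (Q S : ser K) : Prop :=
  forall k j, smul S S k j + (if j is j'.+1 then Dx (S k j') else 0) = Q k j.

Definition Sodd (S Sd : ser K) : ser K := fun k j => (S k j - Sd k j) / 2.

Definition derivation (D : K -> K) : Prop :=
  (forall a b, D (a + b) = D a + D b) /\ (forall a b, D (a * b) = D a * b + a * D b).

End Ser.

From HB Require Import structures.
From mathcomp Require Import all_boot all_order all_algebra.
From mathcomp Require Import ring.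
Import Order.TTheory GRing.Theory Num.Theory.
Local Open Scope ring_scope.

(* At order eta^1 (index l = 0 of a transseries, j = 0 of S) every level k is
   governed by the leading coefficients only, and these behave like a power
   series in the single variable  X = alpha eta^{-1/2} e^{eta phi}: products are
   Cauchy products in k, and  eta^{-1} d/dt  acts as  s * X d/dX.
   1. Truncating the leading coefficients to polynomials of degree <= k turns
      the series operations into polynomial operations (section LeadingOrder).
   2. Energy conservation: for A = lambda, B = nu = s X A', the energy
      E = B^2 - (A^4 + t A^2 + 2 c A) satisfies the polynomial identity
      X E' = 2 X A' * (residual of (H_II)); since (H_II) holds, X E' vanishes up
      to degree k, so k E_k = 0 and K_II^{(k)}_0 = 0 for k >= 1.
   3. Hence Q^{(k)}_0 = 2 K^{(k)}_0 = 0 for k >= 1, and the leading Riccati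
      equation  sum_i S^{(i)}_{-1} S^{(k-i)}_{-1} = Q^{(k)}_0  forces, by strong
      induction, S^{(k)}_{-1} = 0 as soon as S^{(0)}_{-1} = S_{-1} != 0.
   4. S_{-1} != 0 because Q_0 is not the zero function of x; the same holds for
      S^dagger, whence the eta^1 coefficient of S_odd vanishes too. *)

Lemma energy_identity {R : comNzRingType} {s : R} (t c : R) {A B : {poly R}} :
  B = s%:P * ('X * A^`()) ->
  'X * (B ^+ 2 - (A ^+ 4 + (t%:P * A ^+ 2 + (2 * c)%:P * A)))^`() =
  2%:P * ('X * A^`()) *
    (s%:P * ('X * B^`()) - (2%:P * A ^+ 3 + (t%:P * A + c%:P))).
Proof.
move=> hB; rewrite !exprS !expr0 !mulr1 !(derivB, derivD, derivM, derivC).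
move: (B^`()) => dB; rewrite hB polyCM polyC_natr; ring.
Qed.

Lemma coef_Xderiv (R : nzRingType) (p : {poly R}) k :
  ('X * p^`())`_k = p`_k *+ k.
Proof. by rewrite coefXM; case: k => [|k] //=; rewrite coef_deriv. Qed.

Lemma euler_coef_vanish {R : nzRingType} {E F Res : {poly R}} {k : nat} :
  'X * E^`() = F * Res -> (forall j, (j <= k)%N -> Res`_j = 0) ->
  E`_k *+ k = 0.
Proof.
move=> hE hRes; rewrite -coef_Xderiv hE coefM big1 // => i _.
by rewrite hRes ?mulr0 // leq_subr.
Qed.

Lemma derivation0 {K : fieldType} {D : K -> K} : derivation D -> D 0 = 0.
Proof. by case=> hadd _; apply: (addrI (D 0)); rewrite -hadd !addr0. Qed.

Lemma derivation_nat {K : fieldType} {D : K -> K} (n : nat) : derivation D -> D n%:R = 0.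
Proof.
move=> hD; have [hadd hmul] := hD.
have D1 : D 1 = 0.
  by have := hmul 1 1; rewrite !mulr1 mul1r => h; apply: (addrI (D 1)); rewrite -h addr0.
by elim: n => [|n IH]; [exact: derivation0 | rewrite mulrS hadd IH D1 addr0].
Qed.

Section LeadingOrder.
Context {K : fieldType}.

Definition lead_agree (n : nat) (f : ser K) (p : {poly K}) : Prop :=
  forall j, (j <= n)%N -> f j 0%N = p`_j.

Definition lead_poly (n : nat) (f : ser K) : {poly K} := \poly_(i < n.+1) f i 0%N.

Lemma lead_agree_poly n f : lead_agree n f (lead_poly n f).
Proof. by move=> j hj; rewrite /lead_poly coef_poly ltnS hj. Qed.

Lemma lead_agree_const n a : lead_agree n (sconst a) a%:P.
Proof. by move=> j _; rewrite /sconst coefC andbT. Qed.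

Lemma lead_agree_add n f g p q :
  lead_agree n f p -> lead_agree n g q -> lead_agree n (sadd f g) (p + q).
Proof. by move=> hf hg j hj; rewrite /sadd coefD hf ?hg. Qed.

Lemma lead_agree_sub n f g p q :
  lead_agree n f p -> lead_agree n g q -> lead_agree n (ssub f g) (p - q).
Proof. by move=> hf hg j hj; rewrite /ssub coefB hf ?hg. Qed.

Lemma lead_agree_scale n a f p :
  lead_agree n f p -> lead_agree n (sscale a f) (a%:P * p).
Proof. by move=> hf j hj; rewrite /sscale coefCM hf. Qed.

Lemma smul_lead (f g : ser K) k :
  smul f g k 0%N = \sum_(i < k.+1) f i 0%N * g (k - i)%N 0%N.
Proof. by apply: eq_bigr => i _; rewrite big_ord1 sub0n. Qed.

Lemma lead_agree_mul n f g p q :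
  lead_agree n f p -> lead_agree n g q -> lead_agree n (smul f g) (p * q).
Proof.
move=> hf hg j hj; rewrite smul_lead coefM; apply: eq_bigr => i _.
rewrite hf ?hg //; first by apply: leq_trans (leq_subr _ _) hj.
by apply: leq_trans hj; rewrite -ltnS.
Qed.

Lemma lead_agree_exp n f p m : lead_agree n f p -> lead_agree n (sexp f m) (p ^+ m).
Proof.
move=> hf; elim: m => [|m IH]; first by rewrite expr0; exact: lead_agree_const.
by rewrite exprS; apply: lead_agree_mul.
Qed.

Lemma energy_conserved {k : nat} {Dt : K -> K} {s t c : K} {lam : ser K} :
  [pchar K] =i pred0 -> (0 < k)%N ->
  (forall j, (j <= k)%N -> ddt Dt s (nu_of Dt s lam) j 0%N = PII t c lam j 0%N) ->
  KII t c lam (nu_of Dt s lam) k 0%N = 0.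
Proof.
move=> hch hk hode; set nu := nu_of Dt s lam.
set A := lead_poly k lam; set B := lead_poly k nu.
have hA : lead_agree k lam A := lead_agree_poly k lam.
have hB : lead_agree k nu B := lead_agree_poly k nu.
have nu_lead : B = s%:P * ('X * A^`()).
  apply/polyP => j; rewrite coefCM coef_Xderiv /B /A !coef_poly.
  case: ifP => _; last by rewrite mul0rn mulr0.
  by rewrite /nu /nu_of /ddt; case: j => [|j]; rewrite addr0 -mulr_natr; ring.
set P := 2%:P * A ^+ 3 + (t%:P * A + c%:P).
have hP : lead_agree k (PII t c lam) P.
  apply: lead_agree_add; first by apply/lead_agree_scale/lead_agree_exp.
  by apply: lead_agree_add; [apply: lead_agree_scale | apply: lead_agree_const].
set E := B ^+ 2 - (A ^+ 4 + (t%:P * A ^+ 2 + (2 * c)%:P * A)).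
have hK : lead_agree k (KII t c lam nu) ((1 / 2)%:P * E).
  apply/lead_agree_scale/lead_agree_sub; first exact: lead_agree_exp.
  apply: lead_agree_add; first exact: lead_agree_exp.
  by apply: lead_agree_add; apply: lead_agree_scale => //; apply: lead_agree_exp.
have residual0 : forall j, (j <= k)%N -> (s%:P * ('X * B^`()) - P)`_j = 0.
  move=> j hj; rewrite coefB coefCM coef_Xderiv -hP // -hode // -hB // /ddt.
  by case: j hj => [|j] _; rewrite addr0 -mulr_natr /nu; ring.
have kE : E`_k *+ k = 0 := euler_coef_vanish (energy_identity t c nu_lead) residual0.
have E0 : E`_k = 0.
  move/eqP: kE; rewrite -mulr_natr mulf_eq0 => /orP [/eqP //|].
  by move/pcharf0P: hch => -> /eqP k0; rewrite k0 in hk.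
by rewrite hK // coefCM E0 mulr0.
Qed.

(* For k >= 1 the leading coefficient of Q_II is twice that of K_II: the
   x-polynomial is level-0 and the remaining terms carry eta^{-1}. *)
Lemma QII_lead t c x (lam nu : ser K) k : (0 < k)%N ->
  QII t c x lam nu k 0%N = 2 * KII t c lam nu k 0%N.
Proof.
case: k => // k _.
by rewrite /QII /sadd /sconst /sscale /sh /= mulr0 !addr0 add0r.
Qed.

(* Leading Riccati recursion: 2 S^{(0)}_{-1} S^{(k)}_{-1} + (lower levels) = Q^{(k)}_0.
   If S^{(0)}_{-1} != 0 and Q^{(k)}_0 = 0 for k >= 1 then S^{(k)}_{-1} = 0. *)
Lemma riccati_lead_vanish {Dx : K -> K} {Q S : ser K} {a : K} :
  a != 0 -> (2 : K) != 0 -> S 0%N 0%N = a -> riccati Dx Q S ->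
  (forall k, (0 < k)%N -> Q k 0%N = 0) ->
  forall k, (0 < k)%N -> S k 0%N = 0.
Proof.
move=> ha h2 hS0 hric hQ k; elim/ltn_ind: k => -[//|k] IH _.
have := hric k.+1 0%N; rewrite addr0 hQ // smul_lead big_ord_recl big_ord_recr /=.
rewrite big1 ?add0r => [|i _]; last by rewrite IH ?mul0r //= ltnS ltn_ord.
rewrite /bump /= add1n subnn subn0 hS0 => h.
have : (2 * a) * S k.+1 0%N = 0 by rewrite -h; ring.
by move/eqP; rewrite !mulf_eq0 (negbTE h2) (negbTE ha) /= => /eqP.
Qed.

(* S_{-1} = sqrt Q_0 is nonzero: x is not a constant for the x-derivation, so
   neither factor of Q_0 = (x - lambda_0)^2 (x^2 + 2 lambda_0 x + 3 lambda_0^2 + t)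
   vanishes (differentiating the second factor twice would give 2 = 0). *)
Lemma sqrt_Q0_neq0 {D : K -> K} {x t lam0 a : K} :
  (2 : K) != 0 -> derivation D -> D x = 1 -> D t = 0 -> D lam0 = 0 ->
  a ^+ 2 = (x - lam0) ^+ 2 * (x ^+ 2 + 2 * lam0 * x + 3 * lam0 ^+ 2 + t) ->
  a != 0.
Proof.
move=> h2 hD Dx1 Dt0 Dl0 ha; apply/eqP => a0; have [hadd hmul] := hD.
have D_x_plus_l0 : D (x + lam0) = 1 by rewrite hadd Dx1 Dl0 addr0.
move: ha; rewrite a0 expr0n /= => /esym/eqP.
rewrite mulf_eq0 expf_eq0 /= => /orP [|/eqP hq].
  rewrite subr_eq0 => /eqP hx.
  by move: Dx1; rewrite hx Dl0 => /eqP; rewrite eq_sym oner_eq0.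
have := congr1 D hq; rewrite (derivation0 hD) !expr2 !hadd !hmul Dx1 Dl0 Dt0.
rewrite !(derivation_nat _ hD) => e.
have : 2 * (x + lam0) = 0 by rewrite -e; ring.
move/eqP; rewrite mulf_eq0 (negbTE h2) /= => /eqP /(congr1 D).
by rewrite D_x_plus_l0 (derivation0 hD) => /eqP; rewrite oner_eq0.
Qed.

End LeadingOrder.

Theorem mainTheorem9 (K : fieldType) (Dt Dx : K -> K)
    (t c x lam0 s Sm1 : K) (lam S Sd : ser K) :
  [pchar K] =i pred0 ->
  derivation Dt -> derivation Dx ->
  Dt t = 1 -> Dt x = 0 -> Dt c = 0 ->
  Dx x = 1 -> Dx t = 0 -> Dx c = 0 ->
  c != 0 ->
  2 * lam0 ^+ 3 + t * lam0 + c = 0 ->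
  s ^+ 2 = 6 * lam0 ^+ 2 + t ->
  Dx lam0 = 0 -> Dx s = 0 -> (forall k l, Dx (lam k l) = 0) ->
  lam 0%N 0%N = lam0 ->
  (forall k l, ddt Dt s (nu_of Dt s lam) k l = PII t c lam k l) ->
  Sm1 ^+ 2 = (x - lam0) ^+ 2 * (x ^+ 2 + 2 * lam0 * x + 3 * lam0 ^+ 2 + t) ->
  S 0%N 0%N = Sm1 -> riccati Dx (QII t c x lam (nu_of Dt s lam)) S ->
  Sd 0%N 0%N = - Sm1 -> riccati Dx (QII t c x lam (nu_of Dt s lam)) Sd ->
  forall k, (0 < k)%N -> S k 0%N = 0 /\ Sodd S Sd k 0%N = 0.
Proof.
move=> hch _ hDx _ _ _ Dxx Dxt _ _ _ _ Dxl0 _ _ _ hode hSm1 hS0 hS hSd0 hSd k hk.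
have h2 : (2 : K) != 0 by move/pcharf0P: hch => ->.
have Q_lead0 : forall j, (0 < j)%N -> QII t c x lam (nu_of Dt s lam) j 0%N = 0.
  by move=> j hj; rewrite QII_lead // (energy_conserved hch hj (fun i _ => hode i 0%N)) mulr0.
have Sm1_neq0 : Sm1 != 0 := sqrt_Q0_neq0 h2 hDx Dxx Dxt Dxl0 hSm1.
have Sk0 := riccati_lead_vanish Sm1_neq0 h2 hS0 hS Q_lead0 k hk.
have Sdk0 := riccati_lead_vanish (a := - Sm1) _ h2 hSd0 hSd Q_lead0 k hk.
by rewrite /Sodd Sk0 Sdk0 ?oppr_eq0 // subrr mul0r.
Qed.
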